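(* Let $f:\mathbb N\to\mathbb R$ be defined by $f(0)=0$ and $f(n)=f(n-1)+1+\frac1n\sum_{i=0}^{n-1}f(i)$ for $n>0$. Then for every $n\ge 0$, $$f(n)=\sum_{k=1}^{n}\frac{1}{k!}\binom{n}{k}.$$ *)

From mathcomp Require Import all_boot all_order all_algebra.
From mathcomp Require Import reals.
Set Implicit Arguments. Unset Strict Implicit. Unset Printing Implicit Defensive.

(* Put g n := \sum_(1 <= k <= n) C(n,k)/k!.  Pascal's rule and
   (n+1) C(n,k) = (k+1) C(n+1,k+1) give (n+1)(g(n+1) - g(n)) = \sum_k C(n+1,k+1)/k!,
   whose k = 0 term is n+1 and whose other terms add up, by the hockey-stick
   identity \sum_(i <= n) C(i,k) = C(n+1,k+1), to \sum_(i <= n) g i.  So g obeys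
   the same recurrence as f, and f = g by strong induction. *)

From mathcomp Require Import all_boot all_order all_algebra.
From mathcomp Require Import reals.
From mathcomp Require Import ring.
Import Order.TTheory GRing.Theory Num.Theory.
Local Open Scope ring_scope.

Lemma sum_bin_hockey n k : (\sum_(i < n) 'C(i, k) = 'C(n, k.+1))%N.
Proof.
elim: n => [|n IHn]; first by rewrite big_ord0.
by rewrite big_ord_recr /= IHn binS.
Qed.

Section BinFactSum.
Variable R : numFieldType.

Definition binfact (n k : nat) : R := 'C(n, k)%:R / k`!%:R.

Definition binfact_sum (n : nat) : R := \sum_(k < n) binfact n k.+1.

Lemma binfact_sum_widen N n :
  (n <= N)%N -> \sum_(k < N) binfact n k.+1 = binfact_sum n.
Proof.
elim: N => [|N IHN]; first by rewrite leqn0 => /eqP ->.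
rewrite leq_eqVlt => /orP[/eqP -> //|]; rewrite ltnS => le_nN.
by rewrite big_ord_recr /= /binfact bin_small ?ltnS // mul0r addr0 IHN.
Qed.

Lemma sum_binfact_sum n :
  \sum_(i < n.+1) binfact_sum i = \sum_(k < n) 'C(n.+1, k.+2)%:R / k.+1`!%:R.
Proof.
have widen_sum : \sum_(i < n.+1) binfact_sum i
                 = \sum_(i < n.+1) \sum_(k < n.+1) binfact i k.+1.
  by apply: eq_bigr => i _; rewrite binfact_sum_widen // ltnW.
have column k : \sum_(i < n.+1) binfact i k.+1 = 'C(n.+1, k.+2)%:R / k.+1`!%:R.
  by rewrite -mulr_suml -natr_sum sum_bin_hockey.
rewrite widen_sum exchange_big big_ord_recr /= column bin_small // mul0r addr0.
by apply: eq_bigr => k _; rewrite column.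
Qed.

Lemma mul_binfact_diff n k :
  n.+1%:R * (binfact n.+1 k.+1 - binfact n k.+1) = 'C(n.+1, k.+1)%:R / k`!%:R.
Proof.
have diag : n.+1%:R * 'C(n, k)%:R = k.+1%:R * 'C(n.+1, k.+1)%:R :> R.
  by rewrite -!natrM mul_bin_diag.
have fact_neq0 : k`!%:R != 0 :> R by rewrite pnatr_eq0 -lt0n fact_gt0.
have pascal : 'C(n.+1, k.+1)%:R - 'C(n, k.+1)%:R = 'C(n, k)%:R :> R.
  by rewrite binS natrD addrAC subrr add0r.
rewrite /binfact -mulrBl pascal mulrA diag factS natrM.
by field; rewrite fact_neq0 addrC natr1 pnatr_eq0.
Qed.

Lemma binfact_sum_rec n :
  binfact_sum n.+1
  = binfact_sum n + 1 + n.+1%:R^-1 * \sum_(i < n.+1) binfact_sum i.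
Proof.
have n1_neq0 : n.+1%:R != 0 :> R by rewrite pnatr_eq0.
have increment : n.+1%:R * (binfact_sum n.+1 - binfact_sum n)
                 = n.+1%:R + \sum_(i < n.+1) binfact_sum i.
  rewrite -(@binfact_sum_widen n.+1 n (leqnSn n)) /binfact_sum -sumrB mulr_sumr.
  under eq_bigr do rewrite mul_binfact_diff.
  by rewrite big_ord_recl /= bin1 divr1 sum_binfact_sum.
apply: (mulfI n1_neq0); rewrite !mulrDr mulrA mulfV // mul1r mulr1.
by rewrite -addrA -increment mulrBr addrC subrK.
Qed.

Lemma binfact_sumE n :
  binfact_sum n = \sum_(1 <= k < n.+1) k`!%:R^-1 * 'C(n, k)%:R.
Proof.
rewrite big_add1 /= big_mkord.
by apply: eq_bigr => k _; rewrite mulrC.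
Qed.

End BinFactSum.

Theorem mainTheorem4 (R : realType) (f : nat -> R)
  (f0 : f 0%N = 0)
  (fS : forall n : nat, (0 < n)%N ->
     f n = f n.-1 + 1 + n%:R^-1 * \sum_(0 <= i < n) f i) :
  forall n : nat,
    f n = \sum_(1 <= k < n.+1) (k`!)%:R^-1 * ('C(n, k))%:R.
Proof.
move=> n; rewrite -binfact_sumE.
elim/ltn_ind: n => -[|n] IHn; first by rewrite f0 /binfact_sum big_ord0.
rewrite fS //= binfact_sum_rec IHn // big_mkord.
have sum_f : \sum_(i < n.+1) f i = \sum_(i < n.+1) binfact_sum R i.
  by apply: eq_bigr => i _; apply: IHn.
by rewrite sum_f.
Qed.
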